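(* Let $X$ be a topological space, $(Z,d)$ a bounded metric space, $F:X\to 2^Z$ a lower quasicontinuous set-valued mapping, and $z_0\in Z$. Then the mapping $\phi:X\to\mathbb R$, $\phi(x)=\sup\{d(z_0,z):z\in F(x)\}$, is cliquish.
   Context: $2^Z$ is the set of nonempty subsets of $Z$. $F:X\to 2^Z$ is lower quasicontinuous if for each $x_0\in X$, each neighborhood $U$ of $x_0$ and each open $W\subset Z$ with $F(x_0)\cap W\ne\emptyset$, there is an open $O$ with $\emptyset\ne O\subset U$ and $F(x)\cap W\ne\emptyset$ for all $x\in O$. A mapping $g$ from $X$ into a metric space is cliquish at $a$ if for each $\varepsilon>0$ and each neighborhood $U$ of $a$ there is an open $O$ with $\emptyset\ne O\subset U$ and $\mathrm{diam}(g(O))\le\varepsilon$; cliquish means cliquish at every point. $\mathrm{diam}(W)=\sup\{d(u,v):u,v\in W\}$. *)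

From Stdlib Require Export Reals Classical.
Open Scope R_scope.

Record TopSpace := {
  tcarrier :> Type;
  topen : (tcarrier -> Prop) -> Prop;
  topen_full : topen (fun _ => True);
  topen_empty : topen (fun _ => False);
  topen_inter : forall A B, topen A -> topen B -> topen (fun x => A x /\ B x);
  topen_union : forall (I : Type) (A : I -> tcarrier -> Prop),
      (forall i, topen (A i)) -> topen (fun x => exists i, A i x)
}.

Definition nbhd (X : TopSpace) (x0 : X) (U : X -> Prop) : Prop :=
  exists V, topen X V /\ V x0 /\ (forall x, V x -> U x).

Record MetricSpace := {
  mcarrier :> Type;
  dist : mcarrier -> mcarrier -> R;
  dist_nonneg : forall u v, 0 <= dist u v;
  dist_eq0 : forall u v, dist u v = 0 <-> u = v;
  dist_sym : forall u v, dist u v = dist v u;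
  dist_tri : forall u v w, dist u w <= dist u v + dist v w
}.

Definition bounded_metric (Z : MetricSpace) : Prop :=
  exists M : R, forall u v : Z, dist Z u v <= M.

Definition mopen (Z : MetricSpace) (W : Z -> Prop) : Prop :=
  forall w, W w -> exists r, 0 < r /\ forall z, dist Z w z < r -> W z.

Definition nonempty_valued (X : TopSpace) (Z : MetricSpace) (F : X -> Z -> Prop) : Prop :=
  forall x, exists z, F x z.

Definition lower_quasicontinuous (X : TopSpace) (Z : MetricSpace)
    (F : X -> Z -> Prop) : Prop :=
  forall (x0 : X) (U : X -> Prop) (W : Z -> Prop),
    nbhd X x0 U -> mopen Z W -> (exists z, F x0 z /\ W z) ->
    exists O : X -> Prop, topen X O /\ (exists x, O x) /\ (forall x, O x -> U x) /\
      (forall x, O x -> exists z, F x z /\ W z).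

Definition diam_le (X : TopSpace) (g : X -> R) (O : X -> Prop) (eps : R) : Prop :=
  forall x y, O x -> O y -> Rabs (g x - g y) <= eps.

Definition cliquish_at (X : TopSpace) (g : X -> R) (a : X) : Prop :=
  forall (eps : R) (U : X -> Prop), 0 < eps -> nbhd X a U ->
    exists O : X -> Prop, topen X O /\ (exists x, O x) /\ (forall x, O x -> U x) /\
      diam_le X g O eps.

Definition cliquish (X : TopSpace) (g : X -> R) : Prop :=
  forall a, cliquish_at X g a.

(* Let s be the supremum of phi over an open neighbourhood V of the point and
   pick x1 in V with phi x1 > s - eps, hence some z in F x1 with
   d(z0, z) > s - eps.  The set W = {w | d(z0, w) > s - eps} is open and meets
   F x1, so lower quasicontinuity yields a nonempty open O inside V on which
   every F x meets W.  On O we then have s - eps < phi <= s, so the oscillation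
   of phi on O is at most eps. *)

From Stdlib Require Import Lra.

Lemma is_lub_approx (E : R -> Prop) (s eps : R) :
  is_lub E s -> 0 < eps -> exists r, E r /\ s - eps < r.
Proof.
  intros [Hub Hleast] Heps.
  apply NNPP; intros Hnone.
  assert (Hs : s <= s - eps) by
    (apply Hleast; intros r Hr; apply Rnot_lt_le; intros Hlt; apply Hnone; eauto).
  lra.
Qed.

Lemma mopen_dist_gt (Z : MetricSpace) (z0 : Z) (c : R) :
  mopen Z (fun w => c < dist Z z0 w).
Proof.
  intros w Hw; exists (dist Z z0 w - c); split; [lra|].
  intros z Hz.
  pose proof (dist_tri Z z0 z w) as Htri.
  rewrite (dist_sym Z z w) in Htri; lra.
Qed.

Lemma diam_le_of_range (X : TopSpace) (g : X -> R) (O : X -> Prop) (s eps : R) :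
  (forall x, O x -> s - eps < g x <= s) -> diam_le X g O eps.
Proof.
  intros Hrange x y Hx Hy.
  destruct (Hrange x Hx), (Hrange y Hy).
  apply Rabs_le; lra.
Qed.

Section SupDistance.

Variables (X : TopSpace) (Z : MetricSpace) (F : X -> Z -> Prop) (z0 : Z) (phi : X -> R).
Hypothesis Hphi : forall x, is_lub (fun r => exists z, F x z /\ r = dist Z z0 z) (phi x).

Lemma dist_le_phi (x : X) (z : Z) : F x z -> dist Z z0 z <= phi x.
Proof. intros Fz; apply (proj1 (Hphi x)); eauto. Qed.

Lemma phi_le_of_bounded_metric (M : R) :
  (forall u v : Z, dist Z u v <= M) -> forall x, phi x <= M.
Proof.
  intros HM x; apply (proj2 (Hphi x)).
  intros r [z [_ ->]]; apply HM.
Qed.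

Lemma phi_gt_witness (x : X) (c : R) :
  c < phi x -> exists z, F x z /\ c < dist Z z0 z.
Proof.
  intros Hc.
  destruct (is_lub_approx _ _ (phi x - c) (Hphi x)) as [r [[z [Fz ->]] Hr]]; [lra|].
  exists z; split; [exact Fz | lra].
Qed.

Lemma phi_gt_on_open_subset (V : X -> Prop) (x1 : X) (c : R) :
  lower_quasicontinuous X Z F -> nbhd X x1 V -> c < phi x1 ->
  exists O : X -> Prop, topen X O /\ (exists x, O x) /\ (forall x, O x -> V x) /\
    (forall x, O x -> c < phi x).
Proof.
  intros HF HV Hc.
  destruct (phi_gt_witness x1 c Hc) as [z [Fz Hz]].
  destruct (HF x1 V _ HV (mopen_dist_gt Z z0 c)) as [O [HOo [HOne [HOV HOW]]]];
    [eauto|].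
  exists O; repeat split; auto.
  intros x Hx; destruct (HOW x Hx) as [w [Fw Hw]].
  pose proof (dist_le_phi x w Fw); lra.
Qed.

Lemma sup_phi_on (M : R) (V : X -> Prop) (a : X) :
  (forall u v : Z, dist Z u v <= M) -> V a ->
  exists s, is_lub (fun r => exists x, V x /\ r = phi x) s.
Proof.
  intros HM Va; apply upper_bound_thm.
  - exists M; intros r [x [_ ->]]; exact (phi_le_of_bounded_metric M HM x).
  - exists (phi a); eauto.
Qed.

End SupDistance.

Theorem lemma3p1 (X : TopSpace) (Z : MetricSpace) (F : X -> Z -> Prop)
  (z0 : Z) (phi : X -> R)
  (HZb : bounded_metric Z)
  (HFne : nonempty_valued X Z F)
  (HF : lower_quasicontinuous X Z F)
  (Hphi : forall x, is_lub (fun r => exists z, F x z /\ r = dist Z z0 z) (phi x)) :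
  cliquish X phi.
Proof.
  intros a eps U Heps [V [HVo [HVa HVU]]].
  destruct HZb as [M HM].
  destruct (sup_phi_on X Z F z0 phi Hphi M V a HM HVa) as [s Hs].
  destruct (is_lub_approx _ s eps Hs Heps) as [r [[x1 [Hx1 ->]] Hr]].
  assert (HV1 : nbhd X x1 V) by (exists V; auto).
  destruct (phi_gt_on_open_subset X Z F z0 phi Hphi V x1 (s - eps) HF HV1 Hr)
    as [O [HOo [HOne [HOV HOgt]]]].
  exists O; repeat split; auto.
  apply (diam_le_of_range X phi O s eps).
  intros x Hx; split; [now apply HOgt|].
  apply (proj1 Hs); eauto.
Qed.
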